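(* Let $B\in\mathbb R^{n\times n}$ be symmetrizable and let $S=\mathrm{diag}(s_1,\dots,s_n)$ be positive definite. Order the (real) eigenvalues of $B$, $BS$, $SB$ and $S^{1/2}BS^{1/2}$ nondecreasingly. Then for every $k\in\{1,\dots,n\}$ there exists $\theta_k\in[\min_i s_i,\max_i s_i]$ such that $$\lambda_k(BS)=\lambda_k(SB)=\lambda_k(S^{1/2}BS^{1/2})=\theta_k\lambda_k(B).$$
   Context: A matrix $B\in\mathbb R^{n\times n}$ is (diagonally) symmetrizable if $DB$ is symmetric for some diagonal matrix $D$ with positive diagonal entries. $S^{1/2}$ denotes the diagonal positive definite square root of $S$. *)

From HB Require Import structures.
From mathcomp Require Import all_boot all_order all_algebra.
From mathcomp Require Import reals.
Set Implicit Arguments. Unset Strict Implicit. Unset Printing Implicit Defensive.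
Import Order.TTheory GRing.Theory Num.Theory.
Local Open Scope ring_scope.

Definition symmetrizable (R : realType) (n : nat) (B : 'M[R]_n) : Prop :=
  exists d : 'rV[R]_n, (forall i, 0 < d 0 i) /\
    (diag_mx d *m B)^T = diag_mx d *m B.

(* [l] is the list of eigenvalues of A (with algebraic multiplicity), all
   real, ordered nondecreasingly: the characteristic polynomial of A splits
   over R with roots l, and l is sorted. Such an l is unique when it exists. *)
Definition sorted_spectrum (R : realType) (n : nat) (A : 'M[R]_n) (l : seq R)
  : Prop :=
  sorted <=%R l /\ char_poly A = \prod_(x <- l) ('X - x%:P).

Definition sqrt_diag (R : realType) (n : nat) (s : 'rV[R]_n) : 'M[R]_n :=
  diag_mx (map_mx Num.sqrt s).

From HB Require Import structures.
From mathcomp Require Import all_boot all_order all_algebra.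
From mathcomp Require Import reals.
From mathcomp Require Import complex.
From mathcomp Require Import lra.
Set Implicit Arguments. Unset Strict Implicit. Unset Printing Implicit Defensive.
Import Order.TTheory GRing.Theory Num.Theory Num.Def.
Local Open Scope ring_scope.

(* Write X ~ Y for similar matrices.  If D B is symmetric with D
   positive diagonal, then C := D^{1/2} B D^{-1/2} is symmetric and B ~ C;
   with T := S^{1/2} we have B S ~ S B ~ T B T ~ T C T.  It therefore
   suffices to compare the sorted spectra of a real symmetric C and of its
   congruent A := T C T (Ostrowski's theorem). *)

Lemma char_poly_sim (F : comUnitRingType) n (X Y M : 'M[F]_n) :
  X *m Y = 1%:M -> char_poly (X *m M *m Y) = char_poly M.
Proof.
move=> XY; have [_ Yu] := mulmx1_unit XY.
have XE : X = invmx Y.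
  by rewrite -[X]mulmx1 -(mulmxV Yu) mulmxA XY mul1mx.
rewrite XE /char_poly.
have -> : char_poly_mx (invmx Y *m M *m Y) =
    map_mx polyC (invmx Y) *m char_poly_mx M *m map_mx polyC Y.
  rewrite /char_poly_mx mulmxBr mulmxBl !map_mxM; congr (_ - _).
  by rewrite scalar_mxC -mulmxA -map_mxM mulVmx // map_mx1 mulmx1.
rewrite !det_mulmx !det_map_mx mulrC mulrA -rmorphM det_inv.
by rewrite mulrV ?unitmxE // rmorph1 mul1r.
Qed.

Section SortedCount.
Variable R : realDomainType.

Definition nbelow (l : seq R) (x : R) : nat := count (fun z => z < x) l.

Lemma nbelow_nth (l : seq R) k : sorted <=%R l -> (k < size l)%N ->
  (nbelow l l`_k <= k)%N.
Proof.
move=> sl kl; rewrite /nbelow -[l in count _ l](cat_take_drop k l) count_cat.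
have -> : count (fun z => z < l`_k) (drop k l) = 0%N.
  apply/eqP; rewrite -leqn0 leqNgt -has_count; apply/hasPn => y /(nthP 0) [i ilt <-].
  rewrite nth_drop -leNgt; apply: (sorted_leq_nth le_trans lexx 0 sl).
  - by rewrite inE.
  - by rewrite inE -ltn_subRL -size_drop.
  - exact: leq_addr.
by rewrite addn0 (leq_trans (count_size _ _)) // size_take kl.
Qed.

Lemma nbelow_gt (l : seq R) k x : sorted <=%R l -> (k < size l)%N -> l`_k < x ->
  (k < nbelow l x)%N.
Proof.
move=> sl kl lx; rewrite /nbelow -(cat_take_drop k.+1 l) count_cat.
apply: leq_trans (leq_addr _ _).
have -> : count (fun z => z < x) (take k.+1 l) = size (take k.+1 l).
  apply/eqP; rewrite -all_count; apply/allP => y /(nthP 0) [i ilt <-].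
  move: ilt; rewrite size_takel // => ilt.
  rewrite nth_take //; apply: le_lt_trans lx.
  apply: (sorted_leq_nth le_trans lexx 0 sl).
  - by rewrite inE (leq_trans ilt).
  - by rewrite inE.
  - by rewrite -ltnS.
by rewrite size_takel.
Qed.

Lemma nth_lt_nbelow (l : seq R) k x : sorted <=%R l -> (k < size l)%N ->
  (l`_k < x) = (k < nbelow l x)%N.
Proof.
move=> sl kl; apply/idP/idP; first exact: nbelow_gt.
apply: contraLR; rewrite -leNgt -leqNgt => xl.
apply: leq_trans (nbelow_nth sl kl).
by apply: sub_count => z /= zx; apply: lt_le_trans xl.
Qed.

End SortedCount.

Section Inertia.
Variable R : rcfType.
Local Notation Cx := (R[i]).
Local Notation toC := (real_complex R).

Definition hform n (M : 'M[Cx]_n) (u : 'rV[Cx]_n) : Cx :=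
  (u *m M *m (map_mx conjC u)^T) 0 0.

Definition spectral_decomp n (M Q : 'M[Cx]_n) (e : 'rV[R]_n) : Prop :=
  Q \is unitarymx /\ M = invmx Q *m diag_mx (map_mx toC e) *m Q.

Definition neg_set n (e : 'rV[R]_n) : {set 'I_n} := [set j | e 0 j < 0].

Definition entries n (e : 'rV[R]_n) : seq R := [seq e 0 i | i <- enum 'I_n].

Lemma hform_diag n (e : 'rV[R]_n) u :
  hform (diag_mx (map_mx toC e)) u = \sum_j toC (e 0 j) * (u 0 j * (u 0 j)^*).
Proof.
rewrite /hform mul_mx_diag !mxE; apply: eq_bigr => j _.
by rewrite !mxE mulrA [_ * toC (e 0 j)]mulrC.
Qed.

Lemma hform_mul n (M P : 'M[Cx]_n) u :
  hform M (u *m P) = hform (P *m M *m (map_mx conjC P)^T) u.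
Proof. by rewrite /hform map_mxM trmx_mul !mulmxA. Qed.

Lemma hformB n (M1 M2 : 'M[Cx]_n) u : hform (M1 - M2) u = hform M1 u - hform M2 u.
Proof. by rewrite /hform mulmxBr mulmxBl !mxE. Qed.

Lemma hform_spectral n (M Q : 'M[Cx]_n) e u : spectral_decomp M Q e ->
  hform M u = hform (diag_mx (map_mx toC e)) (u *m (map_mx conjC Q)^T).
Proof.
move=> [Qu ->]; rewrite hform_mul invmx_unitary // map_trmx.
congr hform; congr (_ *m _); apply/matrixP => i j; by rewrite !mxE ?conjCK.
Qed.

Definition coord_sel n (S : {set 'I_n}) : 'M[Cx]_(#|S|, n) :=
  \matrix_(k, j) ((j == enum_val k)%:R).

Lemma rank_coord_sel n (S : {set 'I_n}) : \rank (coord_sel S) = #|S|.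
Proof.
have selT : coord_sel S *m (coord_sel S)^T = 1%:M.
  apply/matrixP => k k'; rewrite !mxE (bigD1 (enum_val k)) //= big1 ?addr0.
    rewrite !mxE eqxx mul1r (inj_eq enum_val_inj) eq_sym.
    by case: (k' == k).
  by move=> j /negbTE jk; rewrite !mxE jk mul0r.
apply/eqP; rewrite eqn_leq rank_leq_row /=.
by have := mxrankM_maxl (coord_sel S) (coord_sel S)^T; rewrite selT mxrank1.
Qed.

Lemma coord_sel_out n (S : {set 'I_n}) (w : 'rV[Cx]_#|S|) j :
  j \notin S -> (w *m coord_sel S) 0 j = 0.
Proof.
move=> jS; rewrite !mxE big1 // => k _; rewrite !mxE.
case: eqP => [jk|]; last by rewrite mulr0.
by case/negP: jS; rewrite jk enum_valP.
Qed.

Lemma coord_selT n (S : {set 'I_n}) (v : 'rV[Cx]_n) k :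
  (v *m (coord_sel S)^T) 0 k = v 0 (enum_val k).
Proof.
rewrite !mxE (bigD1 (enum_val k)) //= big1 ?addr0.
  by rewrite !mxE eqxx mulr1.
by move=> j /negbTE jk; rewrite !mxE jk mulr0.
Qed.

Lemma neg_subspace n (M Q : 'M[Cx]_n) e : spectral_decomp M Q e ->
  exists U : 'M[Cx]_(#|neg_set e|, n), \rank U = #|neg_set e| /\
    forall u, (u <= U)%MS -> u != 0 -> hform M u < 0.
Proof.
move=> sp; have Qu := sp.1; have Qunit := unitarymx_unit Qu.
have QiE : invmx Q = (map_mx conjC Q)^T by rewrite invmx_unitary // map_trmx.
exists (coord_sel (neg_set e) *m Q); split.
  by rewrite mxrankMfree ?rank_coord_sel // row_free_unit.
move=> u /submxP [w ->] unz; rewrite (hform_spectral _ sp) hform_diag.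
set v := _ *m _ *m _.
have vE : v = w *m coord_sel (neg_set e).
  by rewrite /v -QiE -(mulmxA w) -mulmxA mulmxV // mulmx1.
have [j vj] : exists j, v 0 j != 0.
  case: (pickP (fun j => v 0 j != 0)) => [j vj|v0]; first by exists j.
  case/negP: unz; apply/eqP; rewrite mulmxA -vE.
  suff -> : v = 0 by rewrite mul0mx.
  by apply/rowP => j; move: (v0 j) => /negbFE/eqP ->; rewrite mxE.
have jS : j \in neg_set e by apply: contraR vj => jS; rewrite vE coord_sel_out.
rewrite (bigD1 j) //=; apply: (@le_lt_trans _ _ (toC (e 0 j) * (v 0 j * (v 0 j)^*))).
  rewrite gerDl; apply: sumr_le0 => i _.
  have [iS|iS] := boolP (i \in neg_set e).
    by rewrite nmulr_rle0 ?mul_conjC_ge0 // ltcR; move: iS; rewrite inE.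
  by rewrite vE coord_sel_out // mul0r mulr0.
rewrite nmulr_rlt0; last by rewrite ltcR; move: jS; rewrite inE.
by rewrite lt_def mul_conjC_eq0 vj mul_conjC_ge0.
Qed.

(* Conversely, a subspace on which the form of M is negative definite has
   rank at most #|neg_set e|: a larger one would meet the span of the
   eigenvectors of nonnegative eigenvalues. *)
Lemma neg_subspace_rank n (M Q : 'M[Cx]_n) e p (U : 'M[Cx]_(p, n)) :
  spectral_decomp M Q e ->
  (forall u, (u <= U)%MS -> u != 0 -> hform M u < 0) ->
  (\rank U <= #|neg_set e|)%N.
Proof.
move=> sp Uneg; rewrite leqNgt; apply/negP => ltU.
set K := (map_mx conjC Q)^T *m (coord_sel (neg_set e))^T.
set Y := row_base U *m K.
have kerNZ : kermx Y != 0.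
  rewrite -mxrank_eq0 mxrank_ker subn_eq0 -ltnNge.
  exact: leq_ltn_trans (rank_leq_col Y) ltU.
set w := nz_row (kermx Y).
have wY : w *m Y = 0 by apply/sub_kermxP; exact: nz_row_sub.
set u := w *m row_base U.
have unz : u != 0 by rewrite /u mulmx_free_eq0 ?row_base_free ?nz_row_eq0.
have uU : (u <= U)%MS.
  by rewrite /u (submx_trans (submxMl _ _)) // eq_row_base.
have := Uneg u uU unz; rewrite (hform_spectral _ sp) hform_diag.
set v := u *m _.
have vS j : j \in neg_set e -> v 0 j = 0.
  have vK : v *m (coord_sel (neg_set e))^T = 0 by rewrite -mulmxA -/K -mulmxA.
  move=> jS; move/matrixP/(_ 0 (enum_rank_in jS j)): vK.
  by rewrite coord_selT enum_rankK_in // => ->; rewrite mxE.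
move=> /lt_geF; rewrite sumr_ge0 // => j _.
have [jS|jS] := boolP (j \in neg_set e); first by rewrite vS // mul0r mulr0.
by rewrite mulr_ge0 ?mul_conjC_ge0 // ler0c; move: jS; rewrite inE -leNgt.
Qed.

Lemma neg_index_le n (M Q M' Q' P : 'M[Cx]_n) e e' :
  spectral_decomp M Q e -> spectral_decomp M' Q' e' -> P \in unitmx ->
  (forall u, hform M (u *m P) <= hform M' u) ->
  (#|neg_set e'| <= #|neg_set e|)%N.
Proof.
move=> sp sp' Pu dom.
have [U' [rU' U'neg]] := neg_subspace sp'.
have := neg_subspace_rank (U := U' *m P) sp.
rewrite mxrankMfree ?row_free_unit // rU'; apply => u uU unz.
have uE : u = (u *m invmx P) *m P by rewrite mulmxKV.
rewrite uE; apply: (le_lt_trans (dom _)); apply: U'neg.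
  by rewrite -[U'](mulmxK Pu) submxMr.
by apply: contra unz => /eqP u0; rewrite uE u0 mul0mx.
Qed.

Lemma map_conj_toC m p (P : 'M[R]_(m, p)) :
  map_mx conjC (map_mx toC P) = map_mx toC P.
Proof.
by apply/matrixP => i j; rewrite !mxE; apply: conj_Creal; rewrite complex_real.
Qed.

Lemma hform_mul_real n (M P : 'M[R]_n) u :
  hform (map_mx toC M) (u *m map_mx toC P) = hform (map_mx toC (P *m M *m P^T)) u.
Proof. by rewrite hform_mul map_conj_toC !map_mxM map_trmx. Qed.

Lemma spectral_sym n (M : 'M[R]_n) : M^T = M ->
  exists Q e, spectral_decomp (map_mx toC M) Q e.
Proof.
move=> MT.
have herm : map_mx toC M \is hermsymmx.
  rewrite is_hermitianmxE expr0 scale1r; apply/eqP/matrixP => i j.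
  by rewrite -map_trmx map_conj_toC !mxE -{1}MT mxE.
have /orthomx_spectralP ME := hermitian_normalmx herm.
have spR := hermitian_spectral_diag_real herm.
set sp := spectral_diag _ in ME spR.
exists (spectralmx (map_mx toC M)), (map_mx (fun z : Cx => complex.Re z) sp).
split; first exact: spectral_unitarymx.
suff -> : map_mx toC (map_mx (fun z : Cx => complex.Re z) sp) = sp by [].
by apply/matrixP => i j; rewrite !mxE RRe_real //; move/mxOverP: spR; apply.
Qed.

Lemma spectral_shift n (M : 'M[R]_n) Q e x : spectral_decomp (map_mx toC M) Q e ->
  spectral_decomp (map_mx toC (M - diag_mx (const_mx x))) Q (e - const_mx x).
Proof.
move=> [Qu ME]; split => //.
have -> : diag_mx (map_mx toC (e - const_mx x)) =
    diag_mx (map_mx toC e) - (toC x)%:M.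
  by apply/matrixP => i j; rewrite !mxE rmorphB mulrnBl.
rewrite map_mxB ME mulmxBr mulmxBl diag_const_mx map_scalar_mx; congr (_ - _).
by rewrite scalar_mxC -mulmxA mulVmx ?mulmx1 // unitarymx_unit.
Qed.

Lemma card_neg_set_shift n (e : 'rV[R]_n) x :
  #|neg_set (e - const_mx x)| = nbelow (entries e) x.
Proof.
rewrite /neg_set /nbelow cardsE cardE size_filter /entries count_map -enumT.
apply: eq_count => j; rewrite /= unfold_in /= !mxE; exact: subr_lt0.
Qed.

Lemma nbelow_congr n (G : 'M[R]_n) Q e Q' e' (a : 'rV[R]_n) (x y : R) :
  spectral_decomp (map_mx toC G) Q e ->
  spectral_decomp (map_mx toC (diag_mx a *m G *m diag_mx a)) Q' e' ->
  (forall j, a 0 j != 0) -> (forall j, y <= a 0 j ^+ 2 * x) ->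
  (nbelow (entries e') y <= nbelow (entries e) x)%N.
Proof.
move=> spG spH anz yx; rewrite -!card_neg_set_shift.
apply: (neg_index_le (P := map_mx toC (diag_mx a)) (spectral_shift x spG)
   (spectral_shift y spH)).
  rewrite unitmxE det_map_mx det_diag unitfE fmorph_eq0.
  by apply/prodf_neq0 => j _; exact: anz.
move=> u; rewrite hform_mul_real tr_diag_mx.
rewrite mulmxBr mulmxBl !mulmx_diag !map_mxB !hformB lerD2l lerN2.
rewrite !map_diag_mx !hform_diag; apply: ler_sum => j _.
rewrite ler_wpM2r ?mul_conjC_ge0 // lecR !mxE.
by rewrite mulrAC -expr2.
Qed.

Lemma spectral_char_poly n (M : 'M[R]_n) Q e :
  spectral_decomp (map_mx toC M) Q e ->
  char_poly M = \prod_(x <- entries e) ('X - x%:P).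
Proof.
move=> [Qu ME]; apply: (@map_poly_inj _ _ toC).
rewrite map_char_poly ME char_poly_sim; last by rewrite mulVmx ?unitarymx_unit.
rewrite char_poly_trig ?diag_mx_is_trig // rmorph_prod /entries big_map big_enum.
by apply: eq_bigr => i _ /=; rewrite map_polyXsubC !mxE eqxx mulr1n.
Qed.

End Inertia.

Section Eigenvalues.
Variable R : realType.

Lemma size_sorted_spectrum n (M : 'M[R]_n) l : sorted_spectrum M l -> size l = n.
Proof. by move=> [_ cM]; have := size_char_poly M; rewrite cM size_prod_XsubC => -[]. Qed.

Lemma sym_sorted_spectrum n (M : 'M[R]_n) : M^T = M -> exists l, sorted_spectrum M l.
Proof.
move=> /spectral_sym [Q [e sp]]; exists (sort <=%R (entries e)); split.
  exact: (sort_sorted (@le_total _ R)).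
rewrite (spectral_char_poly sp); apply: perm_big; rewrite perm_sym.
exact: (permEl (perm_sort _ _)).
Qed.

Lemma nbelow_spectrum n (M : 'M[R]_n) l Q e x : sorted_spectrum M l ->
  spectral_decomp (map_mx (real_complex R) M) Q e ->
  nbelow l x = nbelow (entries e) x.
Proof.
move=> [_ cM] sp; apply: (permP _); apply: prod_XsubC_eq.
by rewrite -cM (spectral_char_poly sp).
Qed.

Lemma eig_congr_lower n (G : 'M[R]_n) (a : 'rV[R]_n) lG lH (k : 'I_n) y :
  G^T = G -> (forall j, a 0 j != 0) ->
  sorted_spectrum G lG -> sorted_spectrum (diag_mx a *m G *m diag_mx a) lH ->
  (forall j, y <= a 0 j ^+ 2 * lG`_k) -> y <= lH`_k.
Proof.
move=> GT anz sG sH ya.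
have HT : (diag_mx a *m G *m diag_mx a)^T = diag_mx a *m G *m diag_mx a.
  by rewrite !trmx_mul tr_diag_mx GT mulmxA.
have [QG [eG spG]] := spectral_sym GT.
have [QH [eH spH]] := spectral_sym HT.
have kG : (k < size lG)%N by rewrite (size_sorted_spectrum sG).
have kH : (k < size lH)%N by rewrite (size_sorted_spectrum sH).
rewrite leNgt (nth_lt_nbelow _ sH.1 kH) -leqNgt.
apply: leq_trans (nbelow_nth sG.1 kG).
rewrite (nbelow_spectrum _ sH spH) (nbelow_spectrum _ sG spG).
exact: nbelow_congr spG spH anz ya.
Qed.

End Eigenvalues.

Section Scalars.
Variable R : realFieldType.

Lemma min_scale_le (m t M c : R) : m <= t -> t <= M ->
  Num.min (m * c) (M * c) <= t * c.
Proof.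
move=> mt tM; rewrite ge_min; case: (leP 0 c) => c0; apply/orP.
  by left; rewrite ler_wpM2r.
by right; rewrite ler_wnM2r // ltW.
Qed.

Lemma inv_scale_bound (m M a c : R) : 0 < m -> m <= M ->
  Num.min (M^-1 * a) (m^-1 * a) <= c -> a <= Num.max (m * c) (M * c).
Proof.
move=> m0 mM; have M0 := lt_le_trans m0 mM.
by rewrite ge_min le_max !ler_pdivrMl // orbC.
Qed.

Lemma ratio_between (m M a c : R) : 0 < m -> m <= M ->
  Num.min (m * c) (M * c) <= a -> a <= Num.max (m * c) (M * c) ->
  exists theta, [/\ m <= theta, theta <= M & a = theta * c].
Proof.
move=> m0 mM; rewrite ge_min le_max => /orP lo /orP hi.
have [c0|c0|c0] := ltgtP c 0.
- have Mm : M * c <= m * c by rewrite ler_wnM2r // ltW.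
  exists (a / c); rewrite divfK ?lt_eqF // ler_ndivlMr // ler_ndivrMr //.
  by split => //; lra.
- have mM' : m * c <= M * c by rewrite ler_wpM2r // ltW.
  exists (a / c); rewrite divfK ?gt_eqF // ler_pdivlMr // ler_pdivrMr //.
  by split => //; lra.
- exists m; split => //; move: lo hi; rewrite c0 !mulr0 => lo hi.
  by apply/eqP; rewrite eq_le; apply/andP; split; lra.
Qed.

End Scalars.

Section DiagonalScaling.
Variable R : realType.

Definition isqrt_diag n (s : 'rV[R]_n) : 'M[R]_n :=
  diag_mx (map_mx (fun x => (Num.sqrt x)^-1) s).

Lemma sqrt_diagV n (s : 'rV[R]_n) : (forall j, 0 < s 0 j) ->
  sqrt_diag s *m isqrt_diag s = 1%:M /\ isqrt_diag s *m sqrt_diag s = 1%:M.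
Proof.
move=> spos; rewrite !mulmx_diag -diag_const_mx.
by split; congr diag_mx; apply/rowP => j; rewrite !mxE ?mulfV ?mulVf // gt_eqF ?sqrtr_gt0.
Qed.

Lemma sqrt_diag_sqr n (s : 'rV[R]_n) : (forall j, 0 < s 0 j) ->
  sqrt_diag s *m sqrt_diag s = diag_mx s.
Proof.
move=> spos; rewrite mulmx_diag; congr diag_mx; apply/rowP => j.
by rewrite !mxE -expr2 sqr_sqrtr // ltW.
Qed.

(* B S, S B and S^{1/2} B S^{1/2} are similar:
   B S = S^{-1/2} (S^{1/2} B S^{1/2}) S^{1/2} and
   S B = S^{1/2} (S^{1/2} B S^{1/2}) S^{-1/2}. *)
Lemma scaled_char_poly n (B : 'M[R]_n) (s : 'rV[R]_n) : (forall j, 0 < s 0 j) ->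
  char_poly (B *m diag_mx s) = char_poly (sqrt_diag s *m B *m sqrt_diag s) /\
  char_poly (diag_mx s *m B) = char_poly (sqrt_diag s *m B *m sqrt_diag s).
Proof.
move=> spos; have [TTi TiT] := sqrt_diagV spos; rewrite -sqrt_diag_sqr //.
set A := sqrt_diag s *m B *m sqrt_diag s; split.
  by rewrite -(char_poly_sim A TiT) /A !mulmxA TiT mul1mx.
by rewrite -(char_poly_sim A TTi) /A -!mulmxA TTi mulmx1.
Qed.

(* Symmetrization: if diag(d) B is symmetric with d > 0, then
   C := D^{1/2} B D^{-1/2} is symmetric and similar to B, and so is
   D_t C D_t to D_t B D_t for every diagonal D_t (diagonal matrices commute). *)
Lemma symmetrize n (B : 'M[R]_n) (d : 'rV[R]_n) : (forall j, 0 < d 0 j) ->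
  (diag_mx d *m B)^T = diag_mx d *m B ->
  exists C : 'M[R]_n, [/\ C^T = C, char_poly B = char_poly C &
    forall t : 'rV[R]_n, char_poly (diag_mx t *m B *m diag_mx t) =
                         char_poly (diag_mx t *m C *m diag_mx t)].
Proof.
move=> dpos dsym; have [EEi EiE] := sqrt_diagV dpos.
set E := sqrt_diag d in EEi EiE *; set Ei := isqrt_diag d in EEi EiE *.
have BD : B^T *m (E *m E) = E *m E *m B.
  by rewrite sqrt_diag_sqr // -[RHS]dsym trmx_mul tr_diag_mx.
exists (E *m B *m Ei); split.
- rewrite !trmx_mul !tr_diag_mx -/E -/Ei.
  transitivity (Ei *m (B^T *m (E *m E)) *m Ei).
    by rewrite !mulmxA -(mulmxA _ E Ei) EEi mulmx1.
  by rewrite BD !mulmxA EiE mul1mx.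
- by rewrite char_poly_sim.
move=> t; rewrite -(char_poly_sim (diag_mx t *m B *m diag_mx t) EEi).
by rewrite /E /Ei !mulmxA diag_mxC -!mulmxA [diag_mx _ *m diag_mx t]diag_mxC.
Qed.

End DiagonalScaling.

Theorem ostrowski (R : realType) n (C : 'M[R]_n) (s : 'rV[R]_n) lC lA (k : 'I_n) :
  C^T = C -> (forall j, 0 < s 0 j) ->
  sorted_spectrum C lC -> sorted_spectrum (sqrt_diag s *m C *m sqrt_diag s) lA ->
  exists theta, [/\ \big[Num.min/s 0 k]_(i < n) s 0 i <= theta,
    theta <= \big[Num.max/s 0 k]_(i < n) s 0 i & lA`_k = theta * lC`_k].
Proof.
move=> CT spos sC sA.
set m := \big[Num.min/s 0 k]_(i < n) s 0 i.
set M := \big[Num.max/s 0 k]_(i < n) s 0 i.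
have mle j : m <= s 0 j by rewrite /m (bigD1 j) //= ge_min lexx.
have leM j : s 0 j <= M by rewrite /M (bigD1 j) //= le_max lexx.
have m0 : 0 < m by apply: (big_ind (fun x => 0 < x)) => // x y x0 y0; rewrite lt_min x0.
have mM : m <= M := le_trans (mle k) (leM k).
have [TTi TiT] := sqrt_diagV spos.
have AT : (sqrt_diag s *m C *m sqrt_diag s)^T = sqrt_diag s *m C *m sqrt_diag s.
  by rewrite !trmx_mul tr_diag_mx CT mulmxA.
have CE : isqrt_diag s *m (sqrt_diag s *m C *m sqrt_diag s) *m isqrt_diag s = C.
  by rewrite !mulmxA TiT mul1mx -mulmxA TTi mulmx1.
have lowA y : (forall j, y <= s 0 j * lC`_k) -> y <= lA`_k.
  move=> ys; apply: (eig_congr_lower (a := map_mx Num.sqrt s) CT _ sC sA) => j.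
    by rewrite mxE gt_eqF ?sqrtr_gt0.
  by rewrite mxE sqr_sqrtr ?ys // ltW.
have lowC y : (forall j, y <= (s 0 j)^-1 * lA`_k) -> y <= lC`_k.
  move=> ys; rewrite -CE in sC.
  apply: (eig_congr_lower (a := map_mx (fun x => (Num.sqrt x)^-1) s) AT _ sA sC) => j.
    by rewrite mxE invr_eq0 gt_eqF ?sqrtr_gt0.
  by rewrite mxE exprVn sqr_sqrtr ?ys // ltW.
apply: (ratio_between m0 mM).
  by apply: lowA => j; apply: min_scale_le.
apply: (inv_scale_bound m0 mM); apply: lowC => j; apply: min_scale_le.
  by rewrite lef_pV2 ?posrE ?(lt_le_trans m0).
by rewrite lef_pV2 ?posrE.
Qed.

Theorem lemma5 (R : realType) (n : nat) (B : 'M[R]_n) (s : 'rV[R]_n) :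
  symmetrizable B ->
  (forall i, 0 < s 0 i) ->
  exists lB lBS lSB lSBS : seq R,
    [/\ sorted_spectrum B lB,
        sorted_spectrum (B *m diag_mx s) lBS,
        sorted_spectrum (diag_mx s *m B) lSB,
        sorted_spectrum (sqrt_diag s *m B *m sqrt_diag s) lSBS &
        forall k : 'I_n, exists theta : R,
          [/\ \big[Num.min/s 0 k]_(i < n) s 0 i <= theta,
              theta <= \big[Num.max/s 0 k]_(i < n) s 0 i,
              lBS`_k = lSB`_k, lSB`_k = lSBS`_k &
              lSBS`_k = theta * lB`_k]].
Proof.
move=> [d [dpos dsym]] spos.
have [C [CT charBC charTC]] := symmetrize dpos dsym.
set T := sqrt_diag s.
have AT : (T *m C *m T)^T = T *m C *m T by rewrite !trmx_mul tr_diag_mx CT mulmxA.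
have [lC sC] := sym_sorted_spectrum CT.
have [lA sA] := sym_sorted_spectrum AT.
have specA X : char_poly X = char_poly (T *m B *m T) -> sorted_spectrum X lA.
  by move=> XE; split; [exact: sA.1 | rewrite XE charTC; exact: sA.2].
have [charBS charSB] := scaled_char_poly B spos.
exists lC, lA, lA, lA; split.
- by split; [exact: sC.1 | rewrite charBC; exact: sC.2].
- exact: specA charBS.
- exact: specA charSB.
- exact: specA.
move=> k; have [theta [lo hi scale]] := ostrowski k CT spos sC sA.
by exists theta.
Qed.
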